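(* Let $\mathcal{E}$ be an information exchange that does not transmit information about actions, let the failure model $\mathcal{F}$ act independently on message and action memory, and let $P$ and $P'$ be decision protocols for $\mathcal{E}$. Let $r,\rho$ be runs of $\mathcal{I}_{P,\mathcal{E},\mathcal{F}}$ and $r',\rho'$ runs of $\mathcal{I}_{P',\mathcal{E},\mathcal{F}}$ such that $r$ and $r'$ correspond and $\rho$ and $\rho'$ correspond. Suppose agent $i$ satisfies $(r,m)\sim_i(\rho,m)$ and $i$ does not decide before time $m$ in any of the runs $r,r',\rho,\rho'$. Then $(r',m)\sim_i(\rho',m)$.
   Context: Agents $\mathrm{Agt}=\{1,\dots,n\}$; decision values $V$; actions $A_i=\{\mathtt{noop}\}\cup\{\mathtt{decide}_i(v):v\in V\}$; ''decides at time $m$'' means performs a $\mathtt{decide}$ action at time $m$. An information exchange $\mathcal{E}$ gives each agent $i$ a tuple $(L_i,I_i,M_i,\mu_i,\delta_i)$: local states $L_i$, initial states $I_i$, messages $M_i\ni\bot$, $\mu_i:L_i\times A_i\to(\mathrm{Agt}\to M_i)$, $\delta_i:L_i\times A_i\times\prod_jM_j\to L_i$. It does not transmit information about actions if for each $i$ there are sets $S_i,D_i$ with $L_i=S_i\times D_i$ and functions $\mu'_i$ on $S_i$, $\delta^1_i:S_i\times\prod_jM_j\to S_i$, $\delta^2_i:D_i\times A_i\to D_i$ such that $\mu_i((s,d),a)=\mu'_i(s)$ and $\delta_i((s,d),a,m)=(\delta^1_i(s,m),\delta^2_i(d,a))$. A decision protocol is $P=(P_i:L_i\to A_i)_i$.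 A failure model $\mathcal{F}=(L^*_e,I_e,\delta_e,\mathit{Adv})$ has environment states, nonempty initial ones, update $\delta_e$, and adversaries $(\Delta^t,\Delta^r,\Delta^s)$, $\Delta^t,\Delta^r:\mathbb{N}\times\mathrm{Agt}\times\mathrm{Agt}\times\bigcup_iM_i\to\bigcup_iM_i$, $\Delta^s_i:\mathbb{N}\times L_i\to L_i$; it acts independently on message and action memory if for every adversary and agent $i$ there are $\Delta^s_1:\mathbb{N}\times S_i\to S_i$, $\Delta^s_2:\mathbb{N}\times D_i\to D_i$ with $\Delta^s_i(k,(s,d))=(\Delta^s_1(k,s),\Delta^s_2(k,d))$. Runs $r$ of $\mathcal{I}_{P,\mathcal{E},\mathcal{F}}$: $r(0)=((s_e,\alpha),s_1,\dots,s_n)$ with $s_e\in I_e,\alpha\in\mathit{Adv},s_i\in I_i$; from $r(k)=((s_e,\alpha),s_1,\dots,s_n)$, $r(k+1)=((\delta_e(s_e,(a_1,\dots,a_n)),\alpha),s'_1,\dots,s'_n)$ with $a_i=P_i(s_i)$ (the action of $i$ at time $k$), $m_{i,j}=\mu_i(s_i,a_i)(j)$, $m'_{i,j}=\Delta^r(k,i,j,\Delta^t(k,i,j,m_{i,j}))$, $s^*_j=\delta_j(s_j,a_j,(m'_{1,j},\dots,m'_{n,j}))$, $s'_j=\Delta^s_j(k,s^*_j)$. Runs of different systems correspond if they have the same initial global state. $(r,m)\sim_i(\rho,m)$ iff $r_i(m)=\rho_i(m)$. *)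

From mathcomp Require Import all_boot.
Set Implicit Arguments.
Unset Strict Implicit.
Unset Printing Implicit Defensive.

Notation Agt n := ('I_n).

Inductive action (V : Type) : Type :=
| noop : action V
| decide : V -> action V.
Arguments noop {V}.

Definition is_decide (V : Type) (a : action V) : Prop :=
  exists v, a = decide v.

Record info_exchange (n : nat) (V : Type) (L : Agt n -> Type) := {
  ie_init : forall i, L i -> Prop;
  ie_M : Agt n -> Type;
  ie_bot : forall i, ie_M i;
  ie_mu : forall i, L i -> action V -> (Agt n -> ie_M i);
  ie_delta : forall i, L i -> action V -> (forall j, ie_M j) -> L i
}.
Arguments ie_init {n V L} E i _ : rename.
Arguments ie_M {n V L} E i : rename.
Arguments ie_bot {n V L} E i : rename.
Arguments ie_mu {n V L} E i _ _ _ : rename.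
Arguments ie_delta {n V L} E i _ _ _ : rename.

(* "Does not transmit information about actions": here L i is literally
   S i * D i. *)
Definition no_action_info (n : nat) (V : Type) (S D : Agt n -> Type)
  (E : info_exchange V (fun i => (S i * D i)%type)) : Prop :=
  forall i : Agt n,
  exists (mu' : S i -> (Agt n -> ie_M E i))
         (d1 : S i -> (forall j, ie_M E j) -> S i)
         (d2 : D i -> action V -> D i),
    (forall s d a, ie_mu E i (s, d) a = mu' s) /\
    (forall s d a m, ie_delta E i (s, d) a m = (d1 s m, d2 d a)).

Record adversary (n : nat) (V : Type) (L : Agt n -> Type)
  (E : info_exchange V L) := {
  adv_t : nat -> forall i j : Agt n, ie_M E i -> ie_M E i;
  adv_r : nat -> forall i j : Agt n, ie_M E i -> ie_M E i;
  adv_s : forall i : Agt n, nat -> L i -> L i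
}.
Arguments adv_t {n V L E} _ _ _ _ _ : rename.
Arguments adv_r {n V L E} _ _ _ _ _ : rename.
Arguments adv_s {n V L E} _ i _ _ : rename.

Record failure_model (n : nat) (V : Type) (L : Agt n -> Type)
  (E : info_exchange V L) := {
  fm_Le : Type;
  fm_Ie : fm_Le -> Prop;
  fm_Ie_nonempty : exists s, fm_Ie s;
  fm_delta : fm_Le -> (Agt n -> action V) -> fm_Le;
  fm_Adv : adversary E -> Prop
}.
Arguments fm_Le {n V L E} F : rename.
Arguments fm_Ie {n V L E} F _ : rename.
Arguments fm_delta {n V L E} F _ _ : rename.
Arguments fm_Adv {n V L E} F _ : rename.

Definition acts_independently (n : nat) (V : Type) (S D : Agt n -> Type)
  (E : info_exchange V (fun i => (S i * D i)%type)) (F : failure_model E)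
  : Prop :=
  forall alpha, fm_Adv F alpha -> forall i : Agt n,
  exists (ds1 : nat -> S i -> S i) (ds2 : nat -> D i -> D i),
    forall k s d, adv_s alpha i k (s, d) = (ds1 k s, ds2 k d).

Definition protocol (n : nat) (V : Type) (L : Agt n -> Type) :=
  forall i : Agt n, L i -> action V.

Definition gstate (n : nat) (V : Type) (L : Agt n -> Type)
  (E : info_exchange V L) (F : failure_model E) :=
  ((fm_Le F * adversary E) * (forall i : Agt n, L i))%type.

Definition local (n : nat) (V : Type) (L : Agt n -> Type)
  (E : info_exchange V L) (F : failure_model E)
  (g : gstate F) (i : Agt n) : L i := g.2 i.

Definition step (n : nat) (V : Type) (L : Agt n -> Type)
  (E : info_exchange V L) (F : failure_model E) (P : protocol V L)
  (k : nat) (g : gstate F) : gstate F :=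
  let se := g.1.1 in
  let alpha := g.1.2 in
  let s := g.2 in
  let a := fun i => P i (s i) in
  let m' := fun (i j : Agt n) =>
              adv_r alpha k i j (adv_t alpha k i j (ie_mu E i (s i) (a i) j)) in
  ((fm_delta F se a, alpha),
   fun j => adv_s alpha j k (ie_delta E j (s j) (a j) (fun i => m' i j))).

Definition is_run (n : nat) (V : Type) (L : Agt n -> Type)
  (E : info_exchange V L) (F : failure_model E) (P : protocol V L)
  (r : nat -> gstate F) : Prop :=
  [/\ fm_Ie F (r 0).1.1, fm_Adv F (r 0).1.2,
      (forall i, ie_init E i ((r 0).2 i))
    & forall k, r k.+1 = step P k (r k)].

Definition correspond (n : nat) (V : Type) (L : Agt n -> Type)
  (E : info_exchange V L) (F : failure_model E) (r r' : nat -> gstate F) :=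
  r 0 = r' 0.

Definition indist (n : nat) (V : Type) (L : Agt n -> Type)
  (E : info_exchange V L) (F : failure_model E) (i : Agt n)
  (r rho : nat -> gstate F) (m : nat) : Prop :=
  local (r m) i = local (rho m) i.

Definition decides_at (n : nat) (V : Type) (L : Agt n -> Type)
  (E : info_exchange V L) (F : failure_model E) (P : protocol V L)
  (r : nat -> gstate F) (i : Agt n) (k : nat) : Prop :=
  is_decide (P i (local (r k) i)).

Definition no_decide_before (n : nat) (V : Type) (L : Agt n -> Type)
  (E : info_exchange V L) (F : failure_model E) (P : protocol V L)
  (r : nat -> gstate F) (i : Agt n) (m : nat) : Prop :=
  forall k, k < m -> ~ decides_at P r i k.

(* Agent i's local state splits into a message memory and an action memory.
   Under the hypotheses, the message memories of all agents evolve
   independently of the protocol, while i's action memory is driven by i's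
   own actions only, and these are all noop before i decides.  Hence
   corresponding runs of two protocols give i the same local state at time m,
   and indistinguishability at m transfers from one protocol to the other. *)
From Stdlib Require Import FunctionalExtensionality.
From mathcomp Require Import all_boot.

Lemma not_decide_noop (V : Type) (a : action V) : ~ is_decide a -> a = noop.
Proof. by case: a => // v; case; exists v. Qed.

Section SplitState.
Variables (n : nat) (V : Type) (S D : 'I_n -> Type).
Variables (E : info_exchange V (fun i => (S i * D i)%type)) (F : failure_model E).
Hypothesis HE : no_action_info E.
Hypothesis HF : acts_independently F.

Lemma mu_fst {i : 'I_n} {x y} a b :
  x.1 = y.1 -> ie_mu E i x a = ie_mu E i y b.
Proof.
have [mu' [d1 [d2 [Hmu _]]]] := HE i.
by case: x y => [s d] [s' d'] /= ->; rewrite !Hmu.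
Qed.

Lemma delta_fst {i : 'I_n} {x y} a b mm :
  x.1 = y.1 -> (ie_delta E i x a mm).1 = (ie_delta E i y b mm).1.
Proof.
have [mu' [d1 [d2 [_ Hd]]]] := HE i.
by case: x y => [s d] [s' d'] /= ->; rewrite !Hd.
Qed.

Lemma delta_snd {i : 'I_n} {x y} a mm mm' :
  x.2 = y.2 -> (ie_delta E i x a mm).2 = (ie_delta E i y a mm').2.
Proof.
have [mu' [d1 [d2 [_ Hd]]]] := HE i.
by case: x y => [s d] [s' d'] /= ->; rewrite !Hd.
Qed.

Section Adversary.
Variables (alpha : adversary E) (i : 'I_n) (k : nat).
Hypothesis Halpha : fm_Adv F alpha.

Lemma adv_s_fst {x y} : x.1 = y.1 -> (adv_s alpha i k x).1 = (adv_s alpha i k y).1.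
Proof.
have [ds1 [ds2 Hds]] := HF _ Halpha i.
by case: x y => [s d] [s' d'] /= ->; rewrite !Hds.
Qed.

Lemma adv_s_snd {x y} : x.2 = y.2 -> (adv_s alpha i k x).2 = (adv_s alpha i k y).2.
Proof.
have [ds1 [ds2 Hds]] := HF _ Halpha i.
by case: x y => [s d] [s' d'] /= ->; rewrite !Hds.
Qed.

End Adversary.

Definition same_adversary_and_msgs (g g' : gstate F) :=
  g.1.2 = g'.1.2 /\ forall j, (g.2 j).1 = (g'.2 j).1.

Variables (P P' : protocol V (fun i => (S i * D i)%type)).

Lemma step_same_adversary_and_msgs k (g g' : gstate F) :
  fm_Adv F g.1.2 -> same_adversary_and_msgs g g' ->
  same_adversary_and_msgs (step P k g) (step P' k g').
Proof.
case: g g' => [[se alpha] s] [[se' alpha'] s'] /= Halpha [/= <- Hs].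
split=> //= j; apply: adv_s_fst => //.
have -> : (fun i => adv_r alpha k i j (adv_t alpha k i j
             (ie_mu E i (s i) (P i (s i)) j))) =
          (fun i => adv_r alpha k i j (adv_t alpha k i j
             (ie_mu E i (s' i) (P' i (s' i)) j))).
  apply: functional_extensionality_dep => i.
  by rewrite (mu_fst (P i (s i)) (P' i (s' i)) (Hs i)).
exact: delta_fst.
Qed.

Lemma step_same_act_memory k i (g g' : gstate F) :
  fm_Adv F g.1.2 -> g.1.2 = g'.1.2 ->
  P i (g.2 i) = noop -> P' i (g'.2 i) = noop ->
  (g.2 i).2 = (g'.2 i).2 ->
  ((step P k g).2 i).2 = ((step P' k g').2 i).2.
Proof.
case: g g' => [[se alpha] s] [[se' alpha'] s'] /= Halpha <- Ha Ha' Hd.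
by apply: adv_s_snd => //; rewrite Ha Ha'; exact: delta_snd.
Qed.

Lemma run_adversary_const {Q : protocol V (fun i => (S i * D i)%type)}
  {r : nat -> gstate F} k :
  is_run Q r -> (r k).1.2 = (r 0).1.2.
Proof. by case=> _ _ _ Hs; elim: k => // k IH; rewrite Hs. Qed.

Variables (r r' : nat -> gstate F).
Hypotheses (Hr : is_run P r) (Hr' : is_run P' r') (Hc : correspond r r').

Lemma run_adv_admissible k : fm_Adv F (r k).1.2.
Proof. by rewrite (run_adversary_const k Hr); case: Hr. Qed.

Lemma run_same_adversary_and_msgs k : same_adversary_and_msgs (r k) (r' k).
Proof.
case: Hr Hr' => _ _ _ Hs [_ _ _ Hs'].
elim: k => [|k IH]; first by rewrite Hc.
by rewrite Hs Hs'; exact: step_same_adversary_and_msgs (run_adv_admissible k) IH.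
Qed.

Lemma run_same_act_memory {i m} :
  no_decide_before P r i m -> no_decide_before P' r' i m ->
  ((r m).2 i).2 = ((r' m).2 i).2.
Proof.
move=> Hn Hn'; case: Hr Hr' => _ _ _ Hs [_ _ _ Hs'].
suff Hle : forall k, k <= m -> ((r k).2 i).2 = ((r' k).2 i).2.
  exact: Hle m (leqnn m).
elim=> [|k IH] Hkm; first by rewrite Hc.
rewrite Hs Hs'; apply: step_same_act_memory (run_adv_admissible k) _ _ _ _.
- by case: (run_same_adversary_and_msgs k).
- exact/not_decide_noop/Hn.
- exact/not_decide_noop/Hn'.
- exact/IH/ltnW.
Qed.

Lemma correspond_local_eq i m :
  no_decide_before P r i m -> no_decide_before P' r' i m ->
  local (r m) i = local (r' m) i.
Proof.
move=> Hn Hn'; rewrite /local (surjective_pairing ((r m).2 i)).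
rewrite (surjective_pairing ((r' m).2 i)) (run_same_act_memory Hn Hn').
by case: (run_same_adversary_and_msgs m) => _ ->.
Qed.

End SplitState.

Arguments correspond_local_eq {n V S D E F} HE HF {P P' r r'} Hr Hr' Hc {i m}.

Theorem lemma14 (n : nat) (V : Type) (S D : 'I_n -> Type)
  (E : info_exchange V (fun i => (S i * D i)%type))
  (F : failure_model E)
  (P P' : protocol V (fun i => (S i * D i)%type))
  (r rho r' rho' : nat -> gstate F) (i : 'I_n) (m : nat) :
  no_action_info E ->
  acts_independently F ->
  is_run P r -> is_run P rho ->
  is_run P' r' -> is_run P' rho' ->
  correspond r r' -> correspond rho rho' ->
  indist i r rho m ->
  no_decide_before P r i m -> no_decide_before P' r' i m ->
  no_decide_before P rho i m -> no_decide_before P' rho' i m ->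
  indist i r' rho' m.
Proof.
move=> HE HF Hr Hrho Hr' Hrho' Hcr Hcrho Hi Nr Nr' Nrho Nrho'.
rewrite /indist -(correspond_local_eq HE HF Hr Hr' Hcr Nr Nr').
by rewrite -(correspond_local_eq HE HF Hrho Hrho' Hcrho Nrho Nrho').
Qed.
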